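(* Let $a,b,c,d>0$, $\mu\in(0,1]$, $u>(c+d)/2$, and consider on $\mathcal{I}=[0,1]^2$ the controlled system $$\dot x=x(1-x)\big[xr(-c+d-a+b)+x(a-b)-r(d+b)+b+u\big]+\mu(1-2x),\qquad \dot r=r(1-r)(2x-1).$$ Let $(x_t^*,1)$ be the equilibrium of this system on the side $\{r=1\}$ with $x_t^*\in(1/2,1)$. Then $(x_t^*,1)$ is locally asymptotically stable, while all other equilibria of the system (if any exist) are unstable.
   Context: For these parameters there is exactly one equilibrium $(x_t^*,1)$ on $\{(x,1):x\in[0,1]\}$ with $x_t^*\in(1/2,1)$; any other equilibria on that side lie in $\{(x,1):x\in(0,1/2)\}$. *)

From Stdlib Require Import Reals.
From Coquelicot Require Import Coquelicot.
Open Scope R_scope.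

Definition Fx (a b c d mu u x r : R) : R :=
  x * (1 - x) * (x * r * (- c + d - a + b) + x * (a - b) - r * (d + b) + b + u)
  + mu * (1 - 2 * x).

Definition Fr (x r : R) : R := r * (1 - r) * (2 * x - 1).

Definition inI (x r : R) : Prop := 0 <= x <= 1 /\ 0 <= r <= 1.

Definition dist2 (x r x0 r0 : R) : R := sqrt ((x - x0) ^ 2 + (r - r0) ^ 2).

Definition is_solution (a b c d mu u : R) (X Y : R -> R) : Prop :=
  (forall t, 0 < t ->
     is_derive X t (Fx a b c d mu u (X t) (Y t)) /\
     is_derive Y t (Fr (X t) (Y t))) /\
  filterlim X (at_right 0) (locally (X 0)) /\
  filterlim Y (at_right 0) (locally (Y 0)).

Definition is_equilibrium (a b c d mu u x r : R) : Prop :=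
  inI x r /\ Fx a b c d mu u x r = 0 /\ Fr x r = 0.

Definition lyap_stable (a b c d mu u x0 r0 : R) : Prop :=
  forall eps, 0 < eps -> exists delta, 0 < delta /\
    forall X Y, is_solution a b c d mu u X Y -> inI (X 0) (Y 0) ->
      dist2 (X 0) (Y 0) x0 r0 < delta ->
      forall t, 0 <= t -> dist2 (X t) (Y t) x0 r0 < eps.

Definition attractive (a b c d mu u x0 r0 : R) : Prop :=
  exists delta, 0 < delta /\
    forall X Y, is_solution a b c d mu u X Y -> inI (X 0) (Y 0) ->
      dist2 (X 0) (Y 0) x0 r0 < delta ->
      filterlim X (Rbar_locally p_infty) (locally x0) /\
      filterlim Y (Rbar_locally p_infty) (locally r0).

Definition loc_asymp_stable (a b c d mu u x0 r0 : R) : Prop :=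
  lyap_stable a b c d mu u x0 r0 /\ attractive a b c d mu u x0 r0.

Definition unstable (a b c d mu u x0 r0 : R) : Prop :=
  ~ lyap_stable a b c d mu u x0 r0.

(* On the side r = 1 the field is a cubic in x whose only root in [1/2, 1] is xs, and
   near xs the product (x - xs) Fx(x, 1) is at most a negative multiple of (x - xs)^2;
   meanwhile r relaxes to 1 exponentially as long as x > 1/2, and r enters Fx
   affinely.  Hence a box around (xs, 1) whose sides shrink exponentially is forward
   invariant (the field points strictly inward on its boundary), which gives Lyapunov
   stability and attraction at once.  Every other equilibrium is (x1, 1) with x1 < 1/2
   or (x1, 0) with x1 > 1/2, where the distance of r to the side grows exponentially
   while the solution stays close, so it must leave.  Instability needs solutions to
   exist: writing r = logistic w and clamping x to [0, 1] gives a globally Lipschitz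
   planar system, solved by Picard iteration; since x' = mu > 0 at x = 0 and
   x' = -mu < 0 at x = 1, the clamp is never active. *)

From Stdlib Require Import Reals Lra Psatz Classical.
From Coquelicot Require Import Coquelicot.
Open Scope R_scope.

(** * Comparison principle *)

Lemma continuous_at_right (f : R -> R) t :
  continuous f t -> filterlim f (at_right t) (locally (f t)).
Proof.
  apply filterlim_filter_le_1.
  intros P HP. unfold at_right, within. apply (filter_imp P); auto.
Qed.

Lemma at_right_neg_of_lim (f : R -> R) t :
  filterlim f (at_right t) (locally (f t)) -> f t < 0 -> at_right t (fun s => f s < 0).
Proof.
  intros Hf Hneg.
  apply (Hf (fun y => y < 0)).
  exists (mkposreal _ (Ropp_0_gt_lt_contravar _ Hneg)).
  intros y Hy. change (Rabs (y - f t) < - f t) in Hy. apply Rabs_def2 in Hy. lra.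
Qed.

Lemma at_right_neg_of_derive (f : R -> R) t D :
  is_derive f t D -> f t = 0 -> D < 0 -> at_right t (fun s => f s < 0).
Proof.
  intros Hder H0 HD.
  apply is_derive_Reals in Hder.
  destruct (Hder (- D / 2)) as [del Hdel]; [lra |].
  exists del. intros s Hs Hts. change R in s.
  change (Rabs (s - t) < del) in Hs.
  assert (Hq := Hdel (s - t) ltac:(intro; lra) Hs).
  replace (t + (s - t)) with s in Hq by ring.
  rewrite H0, Rminus_0_r in Hq.
  apply Rabs_def2 in Hq.
  assert (Hquot : f s / (s - t) < 0) by lra.
  destruct (Rlt_or_le (f s) 0) as [| Hfs]; [assumption |].
  assert (0 <= f s / (s - t)) by (apply Rdiv_le_0_compat; lra).
  lra.
Qed.

Lemma nonpos_of_nonpos_before (f : R -> R) t :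
  0 < t -> continuous f t -> (forall s, 0 <= s < t -> f s <= 0) -> f t <= 0.
Proof.
  intros Ht Hc Hbefore.
  destruct (Rle_or_lt (f t) 0) as [| Hpos]; [assumption |].
  destruct (proj1 (filterlim_locally f (f t)) Hc (mkposreal _ Hpos)) as [d Hd].
  set (s := t - Rmin d t / 2).
  assert (Hm : 0 < Rmin d t) by (apply Rmin_pos; [apply cond_pos | lra]).
  pose proof (Rmin_l d t). pose proof (Rmin_r d t).
  assert (Hs : ball t d s) by (change (Rabs (s - t) < d); unfold s; rewrite Rabs_left; lra).
  specialize (Hd s Hs). change (Rabs (f s - f t) < f t) in Hd.
  apply Rabs_def2 in Hd.
  pose proof (Hbefore s ltac:(unfold s; lra)). lra.
Qed.

Lemma real_induction (P : R -> Prop) :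
  (forall t, 0 <= t -> (forall s, 0 <= s < t -> P s) -> P t) ->
  (forall t, 0 <= t -> (forall s, 0 <= s <= t -> P s) -> at_right t P) ->
  forall t, 0 <= t -> P t.
Proof.
  intros Hclose Hstep t1 Ht1.
  apply NNPP; intro Hn.
  set (E := fun t => 0 <= t /\ forall s, 0 <= s <= t -> P s).
  assert (HP0 : P 0) by (apply Hclose; [lra | intros; lra]).
  assert (HE0 : E 0) by (split; [lra | intros s Hs; replace s with 0 by lra; exact HP0]).
  assert (Hb : bound E).
  { exists t1. intros t [Ht Hs]. destruct (Rle_or_lt t t1); [assumption |].
    exfalso. apply Hn, Hs. lra. }
  destruct (completeness E Hb (ex_intro _ 0 HE0)) as [S [HSup HSleast]].
  assert (HS0 : 0 <= S) by (apply HSup; exact HE0).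
  assert (Hbelow : forall s, 0 <= s < S -> P s).
  { intros s Hs. apply NNPP; intro Hns.
    enough (S <= s) by lra.
    apply HSleast. intros t [Ht Ht2]. destruct (Rle_or_lt t s); [assumption |].
    exfalso; apply Hns, Ht2; lra. }
  assert (HES : forall s, 0 <= s <= S -> P s).
  { intros s Hs. destruct (Req_dec s S) as [-> |]; [now apply Hclose | apply Hbelow; lra]. }
  destruct (Hstep S HS0 HES) as [eps Heps].
  assert (HEnext : E (S + eps / 2)).
  { split; [pose proof (cond_pos eps); lra |]. intros s Hs.
    destruct (Rle_or_lt s S); [apply HES; lra |].
    apply Heps; [| lra]. change (Rabs (s - S) < eps). rewrite Rabs_right; lra. }
  pose proof (HSup _ HEnext). pose proof (cond_pos eps). lra.
Qed.

Lemma at_right_neg (h : R -> R) t D :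
  h t <= 0 -> filterlim h (at_right t) (locally (h t)) ->
  (h t = 0 -> is_derive h t D /\ D < 0) -> at_right t (fun s => h s < 0).
Proof.
  intros [Hlt | Heq] Hlim Htouch.
  - now apply at_right_neg_of_lim.
  - destruct (Htouch Heq). now apply (at_right_neg_of_derive h t D).
Qed.

Lemma barrier_pair (f g f' g' : R -> R) :
  filterlim f (at_right 0) (locally (f 0)) -> filterlim g (at_right 0) (locally (g 0)) ->
  f 0 < 0 -> g 0 < 0 ->
  (forall t, 0 < t -> is_derive f t (f' t) /\ is_derive g t (g' t)) ->
  (forall t, 0 < t -> f t <= 0 -> g t <= 0 ->
     (f t = 0 -> f' t < 0) /\ (g t = 0 -> g' t < 0)) ->
  forall t, 0 <= t -> f t <= 0 /\ g t <= 0.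
Proof.
  intros Hf0 Hg0 Hf0neg Hg0neg Hder Htouch.
  assert (Hcont : forall t, 0 < t -> continuous f t /\ continuous g t).
  { intros t Ht. destruct (Hder t Ht) as [Hf Hg].
    split; apply (ex_derive_continuous (K := R_AbsRing) (V := R_NormedModule));
      eexists; eassumption. }
  apply real_induction.
  - intros t Ht Hbefore. destruct (Req_dec t 0) as [-> | Ht0]; [lra |].
    destruct (Hcont t ltac:(lra)) as [Hcf Hcg].
    split; apply nonpos_of_nonpos_before; try lra; try assumption;
      intros s Hs; apply Hbefore, Hs.
  - intros t Ht Hupto. destruct (Hupto t ltac:(lra)) as [Hft Hgt].
    apply (filter_imp (fun s => f s < 0 /\ g s < 0)); [intros s []; lra |].
    destruct (Req_dec t 0) as [-> | Ht0].
    + apply filter_and; [apply (at_right_neg f 0 0) | apply (at_right_neg g 0 0)];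
        auto; lra.
    + destruct (Hcont t ltac:(lra)) as [Hcf Hcg].
      destruct (Hder t ltac:(lra)) as [Hdf Hdg].
      destruct (Htouch t ltac:(lra) Hft Hgt) as [Htf Htg].
      apply filter_and; [apply (at_right_neg f t (f' t)) | apply (at_right_neg g t (g' t))];
        auto using continuous_at_right.
Qed.

Lemma barrier (f f' : R -> R) :
  filterlim f (at_right 0) (locally (f 0)) -> f 0 < 0 ->
  (forall t, 0 < t -> is_derive f t (f' t)) ->
  (forall t, 0 < t -> f t = 0 -> f' t < 0) ->
  forall t, 0 <= t -> f t <= 0.
Proof.
  intros Hf0 Hneg Hder Htouch t Ht.
  refine (proj1 (barrier_pair f f f' f' Hf0 Hf0 Hneg Hneg _ _ t Ht)).
  - intros s Hs. split; now apply Hder.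
  - intros s Hs _ _. split; now apply Htouch.
Qed.

Lemma filterlim_at_right_comp_sub (phi psi Y : R -> R) t :
  filterlim Y (at_right t) (locally (Y t)) -> continuous phi (Y t) -> continuous psi t ->
  filterlim (fun s => phi (Y s) - psi s) (at_right t) (locally (phi (Y t) - psi t)).
Proof.
  intros HY Hphi Hpsi.
  apply (filterlim_comp_2 (G := locally (phi (Y t))) (H := locally (psi t))
           (fun s => phi (Y s)) psi (fun p q => plus p (opp q))).
  - exact (filterlim_comp _ _ _ Y phi _ _ _ HY Hphi).
  - exact (continuous_at_right psi t Hpsi).
  - apply (filterlim_comp_2 (G := locally (phi (Y t))) (H := locally (opp (psi t)))
             fst (fun z => opp (snd z)) plus).
    + apply filterlim_fst.
    + apply (filterlim_comp _ _ _ snd opp _ (locally (psi t))).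
      * apply filterlim_snd.
      * apply (filterlim_opp (V := R_NormedModule)).
    + apply (filterlim_plus (V := R_NormedModule)).
Qed.

Lemma is_derive_sq_dev_envelope (F : R -> R) (c A k t dF : R) :
  is_derive F t dF ->
  is_derive (fun s => (F s - c) ^ 2 - (A * exp (- k * s)) ^ 2) t
    (2 * (F t - c) * dF + 2 * k * (A * exp (- k * t)) ^ 2).
Proof.
  intros H.
  assert (HD : Derive F t = dF) by now apply is_derive_unique.
  assert (HE : ex_derive F t) by now exists dF.
  rewrite <- HD. auto_derive; [auto |].
  change (Derive (fun x => F x) t) with (Derive F t). ring.
Qed.

Lemma Rabs_le_of_sq_le x y : 0 <= y -> x ^ 2 <= y ^ 2 -> Rabs x <= y.
Proof.
  intros Hy Hsq. rewrite <- (Rabs_pos_eq y Hy).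
  apply Rsqr_le_abs_0. unfold Rsqr. lra.
Qed.

Lemma Rabs_eq_of_sq_eq x y : 0 <= y -> x ^ 2 = y ^ 2 -> Rabs x = y.
Proof.
  intros Hy Hsq. rewrite <- (pow2_abs x), <- (pow2_abs y) in Hsq.
  rewrite <- (Rabs_pos_eq y Hy).
  apply Rsqr_inj; [apply Rabs_pos | apply Rabs_pos | unfold Rsqr; simpl in Hsq; lra].
Qed.

Lemma exp_trap_pair (X Y DX DY : R -> R) cx cy A sig kx ky :
  0 < A -> 0 < sig ->
  filterlim X (at_right 0) (locally (X 0)) -> filterlim Y (at_right 0) (locally (Y 0)) ->
  (forall t, 0 < t -> is_derive X t (DX t) /\ is_derive Y t (DY t)) ->
  Rabs (X 0 - cx) < A -> Rabs (Y 0 - cy) < sig ->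
  (forall t, 0 < t ->
     Rabs (X t - cx) <= A * exp (- kx * t) -> Rabs (Y t - cy) <= sig * exp (- ky * t) ->
     (Rabs (X t - cx) = A * exp (- kx * t) -> (X t - cx) * DX t < - kx * (X t - cx) ^ 2) /\
     (Rabs (Y t - cy) = sig * exp (- ky * t) -> (Y t - cy) * DY t < - ky * (Y t - cy) ^ 2)) ->
  forall t, 0 <= t ->
    Rabs (X t - cx) <= A * exp (- kx * t) /\ Rabs (Y t - cy) <= sig * exp (- ky * t).
Proof.
  intros hA hsig HX0 HY0 Hder HXi HYi Hin.
  assert (Henv : forall E k s, 0 < E -> 0 <= E * exp (- k * s))
    by (intros E k s HE; pose proof (exp_pos (- k * s)); nra).
  assert (Hpair : forall t, 0 <= t ->
            (X t - cx) ^ 2 - (A * exp (- kx * t)) ^ 2 <= 0 /\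
            (Y t - cy) ^ 2 - (sig * exp (- ky * t)) ^ 2 <= 0).
  { apply (barrier_pair
      (fun s => (X s - cx) ^ 2 - (A * exp (- kx * s)) ^ 2)
      (fun s => (Y s - cy) ^ 2 - (sig * exp (- ky * s)) ^ 2)
      (fun s => 2 * (X s - cx) * DX s + 2 * kx * (A * exp (- kx * s)) ^ 2)
      (fun s => 2 * (Y s - cy) * DY s + 2 * ky * (sig * exp (- ky * s)) ^ 2)).
    - apply (filterlim_at_right_comp_sub (fun y => (y - cx) ^ 2)); [exact HX0 | |];
        apply (ex_derive_continuous (K := R_AbsRing) (V := R_NormedModule)); auto_derive; auto.
    - apply (filterlim_at_right_comp_sub (fun y => (y - cy) ^ 2)); [exact HY0 | |];
        apply (ex_derive_continuous (K := R_AbsRing) (V := R_NormedModule)); auto_derive; auto.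
    - rewrite Rmult_0_r, exp_0, Rmult_1_r. apply Rabs_def2 in HXi. nra.
    - rewrite Rmult_0_r, exp_0, Rmult_1_r. apply Rabs_def2 in HYi. nra.
    - intros t Ht. destruct (Hder t Ht).
      split; now apply is_derive_sq_dev_envelope.
    - intros t Ht Hf Hg.
      destruct (Hin t Ht (Rabs_le_of_sq_le (X t - cx) _ (Henv A kx t hA) ltac:(lra))
                         (Rabs_le_of_sq_le (Y t - cy) _ (Henv sig ky t hsig) ltac:(lra)))
        as [HinX HinY].
      split; intros Hz.
      + specialize (HinX (Rabs_eq_of_sq_eq (X t - cx) _ (Henv A kx t hA) ltac:(lra))).
        replace ((A * exp (- kx * t)) ^ 2) with ((X t - cx) ^ 2) by lra. lra.
      + specialize (HinY (Rabs_eq_of_sq_eq (Y t - cy) _ (Henv sig ky t hsig) ltac:(lra))).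
        replace ((sig * exp (- ky * t)) ^ 2) with ((Y t - cy) ^ 2) by lra. lra. }
  intros t Ht. destruct (Hpair t Ht).
  split; apply Rabs_le_of_sq_le; auto; lra.
Qed.

Lemma exp_escape (Z h : R -> R) k :
  0 < k -> 0 < Z 0 -> filterlim Z (at_right 0) (locally (Z 0)) ->
  (forall t, 0 < t -> is_derive Z t (Z t * h t)) ->
  (forall t, 0 < t -> 2 * k <= h t) ->
  forall t, 0 <= t -> Z 0 / 2 * exp (k * t) <= Z t.
Proof.
  intros hk hZ0 HZ0 Hder Hh t Ht.
  enough (Z 0 / 2 * exp (k * t) - Z t <= 0) by lra.
  revert t Ht.
  apply (barrier (fun s => Z 0 / 2 * exp (k * s) - Z s)
                 (fun s => Z 0 / 2 * (k * exp (k * s)) - Z s * h s)).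
  - replace (Z 0 / 2 * exp (k * 0) - Z 0) with (- Z 0 - - (Z 0 / 2 * exp (k * 0))) by ring.
    eapply filterlim_ext; [| apply (filterlim_at_right_comp_sub (fun y => - y)
                                     (fun s => - (Z 0 / 2 * exp (k * s))) Z 0 HZ0)].
    + intros s; simpl; ring.
    + apply (ex_derive_continuous (K := R_AbsRing) (V := R_NormedModule)). auto_derive. auto.
    + apply (ex_derive_continuous (K := R_AbsRing) (V := R_NormedModule)). auto_derive. auto.
  - rewrite Rmult_0_r, exp_0. lra.
  - intros s Hs.
    apply (is_derive_minus (K := R_AbsRing) (V := R_NormedModule)); [| now apply Hder].
    auto_derive; [auto | ring].
  - intros s Hs Hzero.
    assert (HZs : Z s = Z 0 / 2 * exp (k * s)) by lra.
    assert (Hpos : 0 < Z s) by (rewrite HZs; pose proof (exp_pos (k * s)); nra).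
    pose proof (Hh s Hs).
    replace (Z 0 / 2 * (k * exp (k * s))) with (k * Z s) by (rewrite HZs; ring).
    nra.
Qed.

(** * Global solutions of Lipschitz planar systems *)

Lemma lipschitz_continuous (f : R -> R) M t :
  0 <= M -> (forall s s', Rabs (f s - f s') <= M * Rabs (s - s')) -> continuous f t.
Proof.
  intros hM Hlip. apply filterlim_locally. intros eps.
  assert (hp : 0 < eps / (M + 1)) by (apply Rdiv_lt_0_compat; [apply cond_pos | lra]).
  exists (mkposreal _ hp). intros s Hs.
  change (Rabs (f s - f t) < eps). change (Rabs (s - t) < eps / (M + 1)) in Hs.
  eapply Rle_lt_trans; [apply Hlip |].
  assert (M * Rabs (s - t) <= M * (eps / (M + 1))) by (apply Rmult_le_compat_l; lra).
  assert (M * (eps / (M + 1)) < eps).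
  { apply (Rmult_lt_reg_r (M + 1)); [lra |]. field_simplify; [| lra].
    pose proof (cond_pos eps). nra. }
  lra.
Qed.

Lemma ex_RInt_of_continuous (f : R -> R) a b : (forall s, continuous f s) -> ex_RInt f a b.
Proof. intros H. apply (ex_RInt_continuous (V := R_CompleteNormedModule)). intros; apply H. Qed.

Lemma RInt_lipschitz (f : R -> R) B t t' :
  (forall s, continuous f s) -> (forall s, Rabs (f s) <= B) ->
  Rabs (RInt f 0 t - RInt f 0 t') <= B * Rabs (t - t').
Proof.
  intros Hc Hb.
  assert (E : RInt f 0 t - RInt f 0 t' = RInt f t' t).
  { rewrite <- (RInt_Chasles f 0 t' t) by (apply ex_RInt_of_continuous; auto).
    unfold plus; simpl. ring. }
  rewrite E, Rmult_comm.
  apply (norm_RInt_le_const_abs (V := R_NormedModule) f t' t (RInt f t' t) B (fun x _ => Hb x)).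
  apply (RInt_correct (V := R_CompleteNormedModule)), ex_RInt_of_continuous, Hc.
Qed.

Lemma RInt_exp lam t : 0 < lam -> RInt (fun s => exp (lam * s)) 0 t = (exp (lam * t) - 1) / lam.
Proof.
  intros hl. apply is_RInt_unique.
  replace ((exp (lam * t) - 1) / lam) with (minus (exp (lam * t) / lam) (exp (lam * 0) / lam)).
  2: { unfold minus, plus, opp; simpl. rewrite Rmult_0_r, exp_0. field. lra. }
  apply (is_RInt_derive (fun s => exp (lam * s) / lam)).
  - intros x _. auto_derive; [auto | field; lra].
  - intros x _. apply (ex_derive_continuous (K := R_AbsRing) (V := R_NormedModule)).
    auto_derive. auto.
Qed.

Lemma RInt_exp_bound (g : R -> R) C lam t :
  0 <= t -> 0 < lam -> (forall s, continuous g s) ->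
  (forall s, 0 <= s <= t -> Rabs (g s) <= C * exp (lam * s)) ->
  Rabs (RInt g 0 t) <= C * exp (lam * t) / lam.
Proof.
  intros ht hl Hc Hb.
  assert (Hexp : forall k, ex_RInt (fun s => k * exp (lam * s)) 0 t).
  { intros k. apply ex_RInt_of_continuous. intros s.
    apply (ex_derive_continuous (K := R_AbsRing) (V := R_NormedModule)). auto_derive. auto. }
  assert (HI : forall k, RInt (fun s => k * exp (lam * s)) 0 t = k * ((exp (lam * t) - 1) / lam)).
  { intros k. rewrite <- RInt_exp by auto.
    apply (RInt_scal (fun s => exp (lam * s)) 0 t k).
    apply ex_RInt_of_continuous. intros s.
    apply (ex_derive_continuous (K := R_AbsRing) (V := R_NormedModule)). auto_derive. auto. }
  assert (Hup : RInt g 0 t <= RInt (fun s => C * exp (lam * s)) 0 t).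
  { apply RInt_le; auto; [apply ex_RInt_of_continuous; auto |].
    intros x Hx. pose proof (Hb x ltac:(lra)). pose proof (Rle_abs (g x)). lra. }
  assert (Hlow : RInt (fun s => - C * exp (lam * s)) 0 t <= RInt g 0 t).
  { apply RInt_le; auto; [apply ex_RInt_of_continuous; auto |].
    intros x Hx. pose proof (Hb x ltac:(lra)). pose proof (Rle_abs (- g x)).
    rewrite Rabs_Ropp in *. lra. }
  rewrite HI in Hup, Hlow.
  assert (HC : 0 <= C).
  { pose proof (Hb 0 ltac:(lra)) as H0. rewrite Rmult_0_r, exp_0 in H0.
    pose proof (Rabs_pos (g 0)). lra. }
  assert (C * ((exp (lam * t) - 1) / lam) <= C * exp (lam * t) / lam).
  { unfold Rdiv. rewrite <- Rmult_assoc. apply Rmult_le_compat_r.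
    - left; apply Rinv_0_lt_compat; auto.
    - nra. }
  apply Rabs_le. lra.
Qed.

Lemma is_lim_seq_dist_le (u v : nat -> R) (l l' C : R) :
  is_lim_seq u l -> is_lim_seq v l' -> (forall m, Rabs (u m - v m) <= C) -> Rabs (l - l') <= C.
Proof.
  intros Hu Hv H.
  assert (Hw := is_lim_seq_minus' u v l l' Hu Hv).
  apply is_lim_seq_abs in Hw.
  exact (is_lim_seq_le _ (fun _ => C) _ C H Hw (is_lim_seq_const C)).
Qed.

Lemma is_lim_seq_dist_le_tail (u : nat -> R) (l v C : R) n :
  is_lim_seq u l -> (forall m, (n <= m)%nat -> Rabs (u m - v) <= C) -> Rabs (l - v) <= C.
Proof.
  intros Hu H.
  apply (is_lim_seq_dist_le (fun m => u (m + n)%nat) (fun _ => v)).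
  - now apply is_lim_seq_incr_n.
  - apply is_lim_seq_const.
  - intros m. apply H. lia.
Qed.

Lemma eq_0_of_geometric_bound z C : (forall n, Rabs z <= C * (/ 2) ^ n) -> z = 0.
Proof.
  intros H.
  assert (Hlim : is_lim_seq (fun n => C * (/ 2) ^ n) 0).
  { replace (Finite 0) with (Rbar_mult C 0) by (simpl; f_equal; ring).
    apply is_lim_seq_scal_l, is_lim_seq_geom. rewrite Rabs_right; lra. }
  assert (Habs : Rabs z <= 0).
  { apply (is_lim_seq_le (fun _ => Rabs z) _ (Rabs z) 0 H (is_lim_seq_const _) Hlim). }
  pose proof (Rabs_pos z). apply Rabs_eq_0. lra.
Qed.

Lemma Rmax_0_lipschitz t t' : Rabs (Rmax 0 t - Rmax 0 t') <= Rabs (t - t').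
Proof.
  unfold Rmax. repeat destruct Rle_dec;
  repeat match goal with |- context [Rabs ?z] =>
    destruct (Rcase_abs z); [rewrite (Rabs_left z) by lra | rewrite (Rabs_right z) by lra] end; lra.
Qed.

(* Points of R^2 are encoded as [bool -> R], with the l1 distance. *)
Definition dist1 (x y : bool -> R) : R := Rabs (x true - y true) + Rabs (x false - y false).

Section Picard.
Variables (V : bool -> (bool -> R) -> R) (L B : R) (z0 : bool -> R).
Hypotheses (hL : 0 < L)
  (V_lip : forall i x y, Rabs (V i x - V i y) <= L * dist1 x y)
  (V_bnd : forall i x, Rabs (V i x) <= B).

Fixpoint picard (n : nat) (t : R) (i : bool) : R :=
  match n with
  | O => z0 i
  | S n => z0 i + RInt (fun s => V i (picard n s)) 0 t
  end.

Definition time_lipschitz (p : R -> bool -> R) : Prop :=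
  forall i s s', Rabs (p s i - p s' i) <= B * Rabs (s - s').

(* With [lam = 4 L] a Picard step halves the [exp (lam t)]-weighted distance of iterates. *)
Let lam := 4 * L.
Let M0 := 2 * B / lam.

Lemma V_bound_ge0 : 0 <= B.
Proof. pose proof (V_bnd true z0). pose proof (Rabs_pos (V true z0)). lra. Qed.

Lemma picard_constant_ge0 : 0 <= M0.
Proof. unfold M0, lam. pose proof V_bound_ge0. apply Rdiv_le_0_compat; lra. Qed.

Lemma continuous_V_comp (p : R -> bool -> R) i t :
  time_lipschitz p -> continuous (fun s => V i (p s)) t.
Proof.
  intros Hp. pose proof V_bound_ge0.
  apply (lipschitz_continuous _ (L * (2 * B))); [nra |].
  intros s s'. eapply Rle_trans; [apply V_lip |].
  unfold dist1. pose proof (Hp true s s'). pose proof (Hp false s s'). nra.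
Qed.

Lemma picard_time_lipschitz n : time_lipschitz (picard n).
Proof.
  induction n as [| n IH]; intros i s s'; simpl.
  - rewrite Rminus_eq_0, Rabs_R0. pose proof V_bound_ge0. pose proof (Rabs_pos (s - s')). nra.
  - replace (z0 i + RInt (fun s0 => V i (picard n s0)) 0 s -
             (z0 i + RInt (fun s0 => V i (picard n s0)) 0 s'))
      with (RInt (fun s0 => V i (picard n s0)) 0 s - RInt (fun s0 => V i (picard n s0)) 0 s')
      by ring.
    apply RInt_lipschitz; [intros; now apply continuous_V_comp | intros; apply V_bnd].
Qed.

Lemma picard_step_diff n i t :
  picard (S (S n)) t i - picard (S n) t i =
  RInt (fun s => V i (picard (S n) s) - V i (picard n s)) 0 t.
Proof.
  change (picard (S (S n)) t i) with (z0 i + RInt (fun s => V i (picard (S n) s)) 0 t).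
  change (picard (S n) t i) with (z0 i + RInt (fun s => V i (picard n s)) 0 t).
  rewrite (RInt_minus (V := R_CompleteNormedModule));
    [| apply ex_RInt_of_continuous; intros; apply continuous_V_comp, picard_time_lipschitz ..].
  unfold minus, plus, opp; simpl. ring.
Qed.

Lemma picard_contraction n t : 0 <= t ->
  dist1 (picard (S n) t) (picard n t) <= M0 * (/ 2) ^ n * exp (lam * t).
Proof.
  assert (hlam : 0 < lam) by (unfold lam; lra). pose proof V_bound_ge0.
  revert t. induction n as [| n IH]; intros t ht.
  - unfold dist1; simpl. rewrite !RInt_const. unfold scal; simpl; unfold mult; simpl.
    change (fun i : bool => z0 i) with z0.
    replace (z0 true + (t - 0) * V true z0 - z0 true) with (t * V true z0) by ring.
    replace (z0 false + (t - 0) * V false z0 - z0 false) with (t * V false z0) by ring.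
    rewrite !Rabs_mult, (Rabs_right t) by lra.
    pose proof (V_bnd true z0). pose proof (V_bnd false z0).
    assert (Ht : t <= exp (lam * t) / lam).
    { apply (Rmult_le_reg_l lam); [lra |]. field_simplify; [| lra].
      pose proof (exp_ineq1_le (lam * t)). lra. }
    replace (M0 * 1 * exp (lam * t)) with (2 * B * (exp (lam * t) / lam))
      by (unfold M0; field; lra).
    nra.
  - assert (Hcomp : forall i, Rabs (picard (S (S n)) t i - picard (S n) t i)
                              <= L * (M0 * (/ 2) ^ n) * exp (lam * t) / lam).
    { intros i. rewrite picard_step_diff. apply RInt_exp_bound; auto.
      - intros s. apply (continuous_minus (V := R_NormedModule));
          apply continuous_V_comp, picard_time_lipschitz.
      - intros s hs. eapply Rle_trans; [apply V_lip |].
        rewrite Rmult_assoc. apply Rmult_le_compat_l; [lra |]. apply IH. lra. }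
    unfold dist1. pose proof (Hcomp true). pose proof (Hcomp false).
    replace (M0 * (/ 2) ^ S n * exp (lam * t))
      with (2 * (L * (M0 * (/ 2) ^ n) * exp (lam * t) / lam))
      by (unfold lam; simpl; field; lra).
    lra.
Qed.

Lemma picard_cauchy n m i t : 0 <= t -> (n <= m)%nat ->
  Rabs (picard m t i - picard n t i) <= 2 * M0 * exp (lam * t) * (/ 2) ^ n.
Proof.
  intros ht hnm.
  assert (Hsum : forall k, dist1 (picard (n + k) t) (picard n t)
                          <= 2 * M0 * exp (lam * t) * ((/ 2) ^ n - (/ 2) ^ (n + k))).
  { induction k as [| k IH].
    - unfold dist1. rewrite Nat.add_0_r, !Rminus_eq_0, !Rabs_R0. lra.
    - pose proof (picard_contraction (n + k) t ht) as Hstep.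
      replace (n + S k)%nat with (S (n + k)) by lia.
      unfold dist1 in *.
      pose proof (Rabs_triang (picard (S (n + k)) t true - picard (n + k) t true)
                              (picard (n + k) t true - picard n t true)).
      pose proof (Rabs_triang (picard (S (n + k)) t false - picard (n + k) t false)
                              (picard (n + k) t false - picard n t false)).
      replace (2 * M0 * exp (lam * t) * ((/ 2) ^ n - (/ 2) ^ S (n + k)))
        with (M0 * (/ 2) ^ (n + k) * exp (lam * t)
              + 2 * M0 * exp (lam * t) * ((/ 2) ^ n - (/ 2) ^ (n + k))) by (simpl; field).
      replace (picard (S (n + k)) t true - picard n t true) with
        (picard (S (n + k)) t true - picard (n + k) t true
         + (picard (n + k) t true - picard n t true)) by ring.
      replace (picard (S (n + k)) t false - picard n t false) with
        (picard (S (n + k)) t false - picard (n + k) t false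
         + (picard (n + k) t false - picard n t false)) by ring.
      lra. }
  replace m with (n + (m - n))%nat by lia.
  specialize (Hsum (m - n)%nat). unfold dist1 in Hsum.
  pose proof (Rabs_pos (picard (n + (m - n)) t (negb i) - picard n t (negb i))).
  assert (0 <= 2 * M0 * exp (lam * t) * (/ 2) ^ (n + (m - n))).
  { pose proof picard_constant_ge0. pose proof (exp_pos (lam * t)).
    pose proof (pow_le (/ 2) (n + (m - n)) ltac:(lra)).
    apply Rmult_le_pos; [nra | assumption]. }
  destruct i; simpl in *; lra.
Qed.

(* Times are clamped at [0], so the limit is defined (and constant) for [t < 0]. *)
Definition picard_lim (t : R) (i : bool) : R :=
  real (Lim_seq (fun n => picard n (Rmax 0 t) i)).

Lemma picard_lim_correct t i : is_lim_seq (fun n => picard n (Rmax 0 t) i) (picard_lim t i).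
Proof.
  apply Lim_seq_correct', ex_lim_seq_cauchy_corr. intros eps.
  set (tt := Rmax 0 t). assert (htt : 0 <= tt) by apply Rmax_l.
  set (K := 2 * M0 * exp (lam * tt)).
  assert (hK : 0 <= K).
  { unfold K. pose proof picard_constant_ge0. pose proof (exp_pos (lam * tt)). nra. }
  destruct (pow_lt_1_zero (/ 2) ltac:(rewrite Rabs_right; lra) (eps / (K + 1)))
    as [N HN]; [apply Rdiv_lt_0_compat; [apply cond_pos | lra] |].
  assert (Hb : forall p q, (N <= p)%nat -> (p <= q)%nat -> Rabs (picard q tt i - picard p tt i) < eps).
  { intros p q hp hq. pose proof (picard_cauchy p q i tt htt hq) as Hc. fold K in Hc.
    specialize (HN p hp). rewrite Rabs_right in HN by (apply Rle_ge, pow_le; lra).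
    assert (K * (/ 2) ^ p <= (K + 1) * (/ 2) ^ p) by (pose proof (pow_le (/ 2) p ltac:(lra)); nra).
    assert ((K + 1) * (/ 2) ^ p < (K + 1) * (eps / (K + 1))) by (apply Rmult_lt_compat_l; lra).
    replace ((K + 1) * (eps / (K + 1))) with (pos eps) in * by (field; lra).
    lra. }
  exists N. intros n m hn hm.
  destruct (Nat.le_gt_cases n m) as [hnm | hnm].
  - rewrite Rabs_minus_sym. now apply Hb.
  - apply Hb; [assumption | lia].
Qed.

Lemma picard_lim_error n t i : 0 <= t ->
  Rabs (picard_lim t i - picard n t i) <= 2 * M0 * exp (lam * t) * (/ 2) ^ n.
Proof.
  intros ht. apply (is_lim_seq_dist_le_tail _ _ _ _ n (picard_lim_correct t i)).
  intros m hm. rewrite Rmax_right by lra. now apply picard_cauchy.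
Qed.

Lemma picard_lim_time_lipschitz : time_lipschitz picard_lim.
Proof.
  intros i s s'. pose proof V_bound_ge0.
  apply (is_lim_seq_dist_le _ _ _ _ _ (picard_lim_correct s i) (picard_lim_correct s' i)).
  intros m. eapply Rle_trans; [apply picard_time_lipschitz |].
  apply Rmult_le_compat_l; [lra | apply Rmax_0_lipschitz].
Qed.

Lemma picard_lim_integral t i : 0 <= t ->
  picard_lim t i = z0 i + RInt (fun s => V i (picard_lim s)) 0 t.
Proof.
  intros ht. pose proof picard_constant_ge0. pose proof (exp_pos (lam * t)).
  assert (hlam : 0 < lam) by (unfold lam; lra).
  apply Rminus_diag_uniq, (eq_0_of_geometric_bound _ (2 * M0 * exp (lam * t))).
  intros n.
  assert (Herr : forall s, 0 <= s -> dist1 (picard n s) (picard_lim s)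
                                    <= 4 * M0 * (/ 2) ^ n * exp (lam * s)).
  { intros s hs. unfold dist1.
    rewrite (Rabs_minus_sym (picard n s true)), (Rabs_minus_sym (picard n s false)).
    pose proof (picard_lim_error n s true hs). pose proof (picard_lim_error n s false hs). lra. }
  assert (Hsplit : picard_lim t i - (z0 i + RInt (fun s => V i (picard_lim s)) 0 t) =
     (picard_lim t i - picard (S n) t i)
     + RInt (fun s => V i (picard n s) - V i (picard_lim s)) 0 t).
  { change (picard (S n) t i) with (z0 i + RInt (fun s => V i (picard n s)) 0 t).
    rewrite (RInt_minus (V := R_CompleteNormedModule)); [| apply ex_RInt_of_continuous; intros;
      apply continuous_V_comp; apply picard_time_lipschitz || apply picard_lim_time_lipschitz ..].
    unfold minus, plus, opp; simpl. ring. }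
  assert (Hint : Rabs (RInt (fun s => V i (picard n s) - V i (picard_lim s)) 0 t)
                 <= L * (4 * M0 * (/ 2) ^ n) * exp (lam * t) / lam).
  { apply RInt_exp_bound; auto.
    - intros s. apply (continuous_minus (V := R_NormedModule)); apply continuous_V_comp;
        [apply picard_time_lipschitz | apply picard_lim_time_lipschitz].
    - intros s hs. eapply Rle_trans; [apply V_lip |].
      rewrite Rmult_assoc. apply Rmult_le_compat_l; [lra | apply Herr; lra]. }
  pose proof (picard_lim_error (S n) t i ht) as Hlast.
  rewrite Hsplit. eapply Rle_trans; [apply Rabs_triang |].
  replace (2 * M0 * exp (lam * t) * (/ 2) ^ n)
    with (2 * M0 * exp (lam * t) * (/ 2) ^ S n + L * (4 * M0 * (/ 2) ^ n) * exp (lam * t) / lam)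
    by (unfold lam; simpl; field; lra).
  lra.
Qed.

Lemma picard_lim_derive t i : 0 < t ->
  is_derive (fun s => picard_lim s i) t (V i (picard_lim t)).
Proof.
  intros ht.
  apply (is_derive_ext_loc (fun s => z0 i + RInt (fun s => V i (picard_lim s)) 0 s)).
  { exists (mkposreal t ht). intros s Hs. change (Rabs (s - t) < t) in Hs.
    apply Rabs_def2 in Hs. symmetry. apply picard_lim_integral. lra. }
  replace (V i (picard_lim t)) with (plus zero (V i (picard_lim t))) by apply plus_zero_l.
  apply (is_derive_plus (K := R_AbsRing) (V := R_NormedModule));
    [apply (is_derive_const (K := R_AbsRing) (V := R_NormedModule)) |].
  apply (is_derive_RInt (V := R_CompleteNormedModule) (fun s => V i (picard_lim s)) _ 0).
  - apply filter_forall. intros z. apply RInt_correct, ex_RInt_of_continuous.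
    intros; apply continuous_V_comp, picard_lim_time_lipschitz.
  - apply continuous_V_comp, picard_lim_time_lipschitz.
Qed.
End Picard.

Theorem planar_ode_global_solution (V : bool -> (bool -> R) -> R) (L B : R) (z0 : bool -> R) :
  0 < L ->
  (forall i x y, Rabs (V i x - V i y) <= L * dist1 x y) ->
  (forall i x, Rabs (V i x) <= B) ->
  exists Z : R -> bool -> R,
    (forall i, Z 0 i = z0 i) /\
    (forall i s s', Rabs (Z s i - Z s' i) <= B * Rabs (s - s')) /\
    (forall i t, 0 < t -> is_derive (fun s => Z s i) t (V i (Z t))).
Proof.
  intros hL Hlip Hbnd. exists (picard_lim V z0). split; [| split].
  - intros i. rewrite (picard_lim_integral V L B z0 hL Hlip Hbnd 0 i (Rle_refl 0)), RInt_point.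
    unfold zero; simpl. ring.
  - apply (picard_lim_time_lipschitz V L B z0 hL Hlip Hbnd).
  - intros i t ht. now apply (picard_lim_derive V L B z0 hL Hlip Hbnd).
Qed.

(** * The vector field near the side r = 1 *)

Lemma Fx_r1_centered a b c d mu u x :
  Fx a b c d mu u x 1 =
  (1 / 4 - (x - 1 / 2) ^ 2) * ((u - (c + d) / 2) - (c - d) * (x - 1 / 2))
  - 2 * mu * (x - 1 / 2).
Proof. unfold Fx. field. Qed.

Definition Fx_slope_r (a b c d x : R) : R := x * (1 - x) * (x * (- c + d - a + b) - (d + b)).

Lemma Fx_affine_r a b c d mu u x r :
  Fx a b c d mu u x r = Fx a b c d mu u x 1 + (r - 1) * Fx_slope_r a b c d x.
Proof. unfold Fx, Fx_slope_r. ring. Qed.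

Lemma Fx_slope_r_bound a b c d x : 0 <= x <= 1 ->
  Rabs (Fx_slope_r a b c d x) <= Rabs (- c + d - a + b) + Rabs (d + b).
Proof.
  intros hx. unfold Fx_slope_r. rewrite Rabs_mult.
  assert (H1 : Rabs (x * (1 - x)) <= 1) by (rewrite Rabs_right; [| apply Rle_ge]; nra).
  assert (H2 : Rabs (x * (- c + d - a + b) - (d + b)) <= Rabs (- c + d - a + b) + Rabs (d + b)).
  { pose proof (Rabs_pos (- c + d - a + b)).
    replace (x * (- c + d - a + b) - (d + b)) with (x * (- c + d - a + b) + - (d + b)) by ring.
    eapply Rle_trans; [apply Rabs_triang |].
    rewrite Rabs_Ropp, Rabs_mult, (Rabs_right x) by lra. nra. }
  pose proof (Rabs_pos (x * (1 - x))). pose proof (Rabs_pos (x * (- c + d - a + b) - (d + b))).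
  nra.
Qed.

(* Writing the root equation as [ys * g y = (ys - y) * Bk + y * g ys] isolates the
   factor [y - ys]; [Bk] dominates [(1/4 - y^2) p] because [p - q ys > 0] at a root. *)
Lemma centered_cubic_dissipative (p q mu ys y : R) :
  0 < p -> 0 < mu -> 0 < ys < 1 / 2 -> 0 <= y < 1 / 2 ->
  (1 / 4 - ys ^ 2) * (p - q * ys) - 2 * mu * ys = 0 ->
  (y - ys) * ((1 / 4 - y ^ 2) * (p - q * y) - 2 * mu * y)
  <= - (y - ys) ^ 2 * (1 / 4 - y ^ 2) * (2 * p).
Proof.
  intros hp hmu hys hy hroot.
  set (g := (1 / 4 - y ^ 2) * (p - q * y) - 2 * mu * y).
  set (Bk := (1 / 4 - y ^ 2) * p + y * (ys + y) * (p - q * ys)).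
  assert (E : ys * g = (ys - y) * Bk + y * ((1 / 4 - ys ^ 2) * (p - q * ys) - 2 * mu * ys))
    by (unfold g, Bk; ring).
  rewrite hroot, Rmult_0_r, Rplus_0_r in E.
  assert (Hpq : 0 < p - q * ys) by (assert (0 < 1 / 4 - ys ^ 2) by nra; nra).
  assert (HB : (1 / 4 - y ^ 2) * p <= Bk) by (unfold Bk; assert (0 <= y * (ys + y)) by nra; nra).
  assert (H1 : ys * ((y - ys) * g) <= - (y - ys) ^ 2 * ((1 / 4 - y ^ 2) * p)).
  { replace (ys * ((y - ys) * g)) with ((y - ys) * (ys * g)) by ring.
    rewrite E. assert (0 <= (y - ys) ^ 2) by apply pow2_ge_0. nra. }
  assert (H2 : 0 <= (y - ys) ^ 2 * ((1 / 4 - y ^ 2) * p)).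
  { apply Rmult_le_pos; [apply pow2_ge_0 | apply Rmult_le_pos; nra]. }
  apply (Rmult_le_reg_l ys); [lra |]. nra.
Qed.

Section Equilibria.
Variables a b c d mu u xs : R.
Hypotheses (ha : 0 < a) (hb : 0 < b) (hc : 0 < c) (hd : 0 < d) (hmu : 0 < mu)
  (hu : (c + d) / 2 < u)
  (hxs : 1 / 2 < xs < 1) (heq : Fx a b c d mu u xs 1 = 0).

Lemma Fx_r1_dissipative x : 1 / 2 <= x < 1 ->
  (x - xs) * Fx a b c d mu u x 1
  <= - (x - xs) ^ 2 * (1 / 4 - (x - 1 / 2) ^ 2) * (2 * (u - (c + d) / 2)).
Proof.
  intros hx. rewrite Fx_r1_centered. rewrite Fx_r1_centered in heq.
  replace (x - xs) with ((x - 1 / 2) - (xs - 1 / 2)) by ring.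
  apply centered_cubic_dissipative with (q := c - d); lra.
Qed.

Lemma Fx_r1_root_unique x : 1 / 2 <= x <= 1 -> Fx a b c d mu u x 1 = 0 -> x = xs.
Proof.
  intros hx hF. destruct (Req_dec x 1) as [-> | h1].
  - unfold Fx in hF. lra.
  - assert (H := Fx_r1_dissipative x ltac:(lra)). rewrite hF, Rmult_0_r in H.
    assert (0 < (1 / 4 - (x - 1 / 2) ^ 2) * (2 * (u - (c + d) / 2)))
      by (apply Rmult_lt_0_compat; nra).
    assert ((x - xs) ^ 2 <= 0) by nra. nra.
Qed.

Lemma other_equilibria x r : is_equilibrium a b c d mu u x r -> (x, r) <> (xs, 1) ->
  (r = 1 /\ 0 < x < 1 / 2) \/ (r = 0 /\ 1 / 2 < x < 1).
Proof.
  intros [[hx hr] [hF hR]] hne.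
  assert (hx0 : x <> 0) by (intro; subst; unfold Fx in hF; lra).
  assert (hx1 : x <> 1) by (intro; subst; unfold Fx in hF; lra).
  unfold Fr in hR.
  assert (Hcases : r = 0 \/ r = 1 \/ x = 1 / 2).
  { destruct (Req_dec r 0); auto. destruct (Req_dec r 1); auto. right; right.
    assert (r * (1 - r) <> 0) by (apply Rmult_integral_contrapositive; split; lra).
    apply Rmult_integral in hR. destruct hR; [contradiction | lra]. }
  destruct Hcases as [-> | [-> | ->]].
  - right. split; [reflexivity |]. split; [| lra].
    destruct (Rle_or_lt x (1 / 2)) as [h | h]; [exfalso | assumption].
    unfold Fx in hF.
    assert (0 < x * (a - b) + b + u) by nra.
    assert (0 < x * (1 - x) * (x * (a - b) + b + u)) by (apply Rmult_lt_0_compat; nra).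
    nra.
  - left. split; [reflexivity |]. split; [lra |].
    destruct (Rlt_or_le x (1 / 2)) as [h | h]; [assumption | exfalso].
    apply hne. f_equal. apply Fx_r1_root_unique; lra.
  - exfalso. unfold Fx in hF. nra.
Qed.
End Equilibria.

(** * Stability of (xs, 1) *)

Lemma exp_le_exp x y : x <= y -> exp x <= exp y.
Proof. intros [Hlt | ->]; [left; now apply exp_increasing | lra]. Qed.

Lemma dist2_le_sum x r x0 r0 : dist2 x r x0 r0 <= Rabs (x - x0) + Rabs (r - r0).
Proof.
  unfold dist2. pose proof (Rabs_pos (x - x0)). pose proof (Rabs_pos (r - r0)).
  rewrite <- (sqrt_pow2 (Rabs (x - x0) + Rabs (r - r0))) by lra.
  apply sqrt_le_1_alt. rewrite <- (pow2_abs (x - x0)), <- (pow2_abs (r - r0)). nra.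
Qed.

Lemma Rabs_le_dist2_l x r x0 r0 : Rabs (x - x0) <= dist2 x r x0 r0.
Proof.
  unfold dist2. rewrite <- (sqrt_pow2 (Rabs (x - x0))) by apply Rabs_pos.
  apply sqrt_le_1_alt. rewrite pow2_abs. pose proof (pow2_ge_0 (r - r0)). lra.
Qed.

Lemma Rabs_le_dist2_r x r x0 r0 : Rabs (r - r0) <= dist2 x r x0 r0.
Proof.
  unfold dist2. rewrite <- (sqrt_pow2 (Rabs (r - r0))) by apply Rabs_pos.
  apply sqrt_le_1_alt. rewrite pow2_abs. pose proof (pow2_ge_0 (x - x0)). lra.
Qed.

Lemma filterlim_of_exp_bound (F : R -> R) l k A : 0 < k ->
  (forall t, 0 <= t -> Rabs (F t - l) <= A * exp (- k * t)) ->
  filterlim F (Rbar_locally p_infty) (locally l).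
Proof.
  intros hk H. apply filterlim_locally. intros eps.
  set (M := Rmax 0 (Rabs A / (eps * k))).
  exists M. intros t Ht.
  pose proof (Rmax_l 0 (Rabs A / (eps * k))). pose proof (Rmax_r 0 (Rabs A / (eps * k))).
  pose proof (cond_pos eps).
  change (Rabs (F t - l) < eps). eapply Rle_lt_trans; [apply H; unfold M in *; lra |].
  replace (- k * t) with (- (k * t)) by ring. rewrite exp_Ropp.
  pose proof (exp_pos (k * t)). pose proof (exp_ineq1_le (k * t)).
  assert (HA : Rabs A < t * (eps * k)).
  { apply (Rmult_lt_reg_r (/ (eps * k))); [apply Rinv_0_lt_compat; nra |].
    rewrite Rmult_assoc, Rinv_r, Rmult_1_r by nra. unfold M in *. lra. }
  apply (Rmult_lt_reg_r (exp (k * t))); [assumption |].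
  rewrite Rmult_assoc, Rinv_l, Rmult_1_r by lra.
  pose proof (Rle_abs A). nra.
Qed.

Section Stability.
Variables a b c d mu u xs : R.
Hypotheses (hmu : 0 < mu) (hu : (c + d) / 2 < u)
  (hxs : 1 / 2 < xs < 1) (heq : Fx a b c d mu u xs 1 = 0).

Let Kr := Rabs (- c + d - a + b) + Rabs (d + b).
(* On the strip [|x - xs| <= rho] the reduced field on [r = 1] contracts at rate
   [contraction rho], and [r] relaxes to [1] at rate [r_rate rho]. *)
Let contraction rho := 2 * (u - (c + d) / 2) * (1 / 4 - (xs + rho - 1 / 2) ^ 2).
Let r_rate rho := (2 * (xs - rho) - 1) / 4.

Lemma contraction_pos rho : 0 <= rho -> xs + rho < 1 -> 0 < contraction rho.
Proof.
  intros hr hhi. unfold contraction; cbv beta. apply Rmult_lt_0_compat; [lra |].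
  assert (0 < xs + rho - 1 / 2 < 1 / 2) by lra. nra.
Qed.

Lemma Kr_ge0 : 0 <= Kr.
Proof. unfold Kr. pose proof (Rabs_pos (- c + d - a + b)). pose proof (Rabs_pos (d + b)). lra. Qed.

Lemma Fx_inward x y rho sig kx e :
  0 < rho -> 1 / 2 < xs - rho -> xs + rho < 1 ->
  Kr * sig < contraction rho / 2 * rho -> 0 <= kx <= contraction rho / 2 -> 0 < e <= 1 ->
  Rabs (y - 1) <= sig * e -> Rabs (x - xs) = rho * e ->
  (x - xs) * Fx a b c d mu u x y < - kx * (x - xs) ^ 2.
Proof.
  intros hr hlo hhi hK hkx he Hy Hedge.
  set (al := contraction rho) in *.
  assert (Hx : xs - rho <= x <= xs + rho).
  { assert (Rabs (x - xs) <= rho) by (rewrite Hedge; nra).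
    apply Rabs_le_between in H. lra. }
  assert (Hrate : al <= (1 / 4 - (x - 1 / 2) ^ 2) * (2 * (u - (c + d) / 2))).
  { unfold al, contraction. assert ((x - 1 / 2) ^ 2 <= (xs + rho - 1 / 2) ^ 2)
      by (apply pow_incr; lra). nra. }
  pose proof (Fx_r1_dissipative a b c d mu u xs hmu hu hxs heq x ltac:(lra)) as Hdiss.
  pose proof (Fx_slope_r_bound a b c d x ltac:(lra)) as Hslope. fold Kr in Hslope.
  assert (Hcross : (x - xs) * ((y - 1) * Fx_slope_r a b c d x) <= Rabs (x - xs) * (sig * e * Kr)).
  { eapply Rle_trans; [apply Rle_abs |]. rewrite !Rabs_mult.
    apply Rmult_le_compat_l; [apply Rabs_pos |].
    apply Rmult_le_compat; [apply Rabs_pos | apply Rabs_pos | exact Hy | exact Hslope]. }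
  assert (HX2 : (x - xs) ^ 2 = (rho * e) ^ 2) by (rewrite <- Hedge, <- pow2_abs; reflexivity).
  assert (Hstrict : Rabs (x - xs) * (sig * e * Kr) < (al - kx) * (x - xs) ^ 2).
  { rewrite HX2, Hedge. pose proof Kr_ge0.
    assert (Hpos : 0 < rho * e * e) by (apply Rmult_lt_0_compat; nra).
    assert (al / 2 * rho * (rho * e * e) <= (al - kx) * (rho * e) ^ 2) by nra.
    assert (Kr * sig * (rho * e * e) < al / 2 * rho * (rho * e * e))
      by (apply Rmult_lt_compat_r; lra).
    lra. }
  rewrite Fx_affine_r. nra.
Qed.

Lemma Fr_inward x y rho :
  1 / 2 < xs - rho -> xs - rho <= x -> 1 / 2 <= y -> y <> 1 ->
  (y - 1) * Fr x y < - r_rate rho * (y - 1) ^ 2.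
Proof.
  intros hlo hx hy hy1. unfold Fr, r_rate.
  assert (0 < (y - 1) ^ 2).
  { replace ((y - 1) ^ 2) with (Rsqr (y - 1)) by (unfold Rsqr; ring).
    apply Rsqr_pos_lt. intro. apply hy1. lra. }
  assert ((2 * (xs - rho) - 1) / 4 < y * (2 * x - 1)) by nra.
  replace ((y - 1) * (y * (1 - y) * (2 * x - 1))) with (- (y - 1) ^ 2 * (y * (2 * x - 1))) by ring.
  nra.
Qed.

Lemma trap_near_equilibrium X Y rho sig :
  is_solution a b c d mu u X Y ->
  0 < rho -> 1 / 2 < xs - rho -> xs + rho < 1 -> 0 < sig <= 1 / 2 ->
  Kr * sig < contraction rho / 2 * rho ->
  Rabs (X 0 - xs) < rho -> Rabs (Y 0 - 1) < sig ->
  forall t, 0 <= t ->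
    Rabs (X t - xs) <= rho * exp (- Rmin (contraction rho / 2) (r_rate rho) * t) /\
    Rabs (Y t - 1) <= sig * exp (- r_rate rho * t).
Proof.
  intros [Hder [HX0 HY0]] hr hlo hhi hsig hK hXi hYi.
  set (kx := Rmin (contraction rho / 2) (r_rate rho)).
  assert (hal : 0 < contraction rho) by (apply contraction_pos; lra).
  assert (hka : 0 < r_rate rho) by (unfold r_rate; lra).
  assert (hkx : 0 < kx /\ kx <= contraction rho / 2 /\ kx <= r_rate rho).
  { split; [apply Rmin_pos; lra | split; [apply Rmin_l | apply Rmin_r]]. }
  apply (exp_trap_pair X Y (fun s => Fx a b c d mu u (X s) (Y s)) (fun s => Fr (X s) (Y s)));
    try lra; try assumption.
  intros t Ht HXt HYt.
  assert (hex : 0 < exp (- kx * t) <= 1)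
    by (split; [apply exp_pos | rewrite <- exp_0; apply exp_le_exp; nra]).
  assert (hey : 0 < exp (- r_rate rho * t) <= exp (- kx * t))
    by (split; [apply exp_pos | apply exp_le_exp; nra]).
  apply Rabs_le_between in HXt. apply Rabs_le_between in HYt.
  split; intros Hedge.
  - apply (Fx_inward _ _ rho sig kx (exp (- kx * t))); try lra.
    apply Rabs_le_between. split; nra.
  - apply Fr_inward; [lra | nra | nra |].
    intros HY1. rewrite HY1, Rminus_eq_0, Rabs_R0 in Hedge. nra.
Qed.

Lemma trap_parameters eps : 0 < eps ->
  exists rho sig, 0 < rho <= eps /\ 1 / 2 < xs - rho /\ xs + rho < 1 /\
    0 < sig <= 1 / 2 /\ sig <= eps /\ Kr * sig < contraction rho / 2 * rho.
Proof.
  intros heps.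
  set (rho := Rmin (Rmin ((xs - 1 / 2) / 2) ((1 - xs) / 2)) eps).
  assert (hrho : 0 < rho /\ rho <= (xs - 1 / 2) / 2 /\ rho <= (1 - xs) / 2 /\ rho <= eps).
  { unfold rho. pose proof (Rmin_l (Rmin ((xs - 1 / 2) / 2) ((1 - xs) / 2)) eps).
    pose proof (Rmin_r (Rmin ((xs - 1 / 2) / 2) ((1 - xs) / 2)) eps).
    pose proof (Rmin_l ((xs - 1 / 2) / 2) ((1 - xs) / 2)).
    pose proof (Rmin_r ((xs - 1 / 2) / 2) ((1 - xs) / 2)).
    repeat split; try lra. repeat apply Rmin_pos; lra. }
  assert (hal : 0 < contraction rho) by (apply contraction_pos; lra).
  pose proof Kr_ge0.
  set (bound := contraction rho * rho / (4 * (Kr + 1))).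
  assert (hbound : 0 < bound) by (apply Rdiv_lt_0_compat; nra).
  exists rho, (Rmin (Rmin (1 / 2) eps) bound).
  pose proof (Rmin_l (Rmin (1 / 2) eps) bound). pose proof (Rmin_r (Rmin (1 / 2) eps) bound).
  pose proof (Rmin_l (1 / 2) eps). pose proof (Rmin_r (1 / 2) eps).
  assert (Hpos : 0 < Rmin (Rmin (1 / 2) eps) bound) by (repeat apply Rmin_pos; lra).
  repeat split; try lra.
  assert ((Kr + 1) * Rmin (Rmin (1 / 2) eps) bound <= contraction rho * rho / 4).
  { replace (contraction rho * rho / 4) with ((Kr + 1) * bound) by (unfold bound; field; lra).
    apply Rmult_le_compat_l; lra. }
  nra.
Qed.

Lemma exp_stability_estimate eps : 0 < eps ->
  exists delta k, 0 < delta /\ 0 < k /\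
    forall X Y, is_solution a b c d mu u X Y -> dist2 (X 0) (Y 0) xs 1 < delta ->
      forall t, 0 <= t ->
        Rabs (X t - xs) <= eps * exp (- k * t) /\ Rabs (Y t - 1) <= eps * exp (- k * t).
Proof.
  intros heps.
  destruct (trap_parameters eps heps) as [rho [sig [hrho [hlo [hhi [hsig [hse hK]]]]]]].
  set (k := Rmin (contraction rho / 2) (r_rate rho)).
  assert (hk : 0 < k /\ k <= r_rate rho).
  { pose proof (contraction_pos rho ltac:(lra) hhi).
    split; [apply Rmin_pos; unfold r_rate; lra | apply Rmin_r]. }
  exists (Rmin rho sig), k. split; [apply Rmin_pos; lra | split; [lra |]].
  intros X Y Hsol Hd0 t Ht.
  pose proof (Rmin_l rho sig). pose proof (Rmin_r rho sig).
  pose proof (Rabs_le_dist2_l (X 0) (Y 0) xs 1). pose proof (Rabs_le_dist2_r (X 0) (Y 0) xs 1).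
  destruct (trap_near_equilibrium X Y rho sig Hsol) with (t := t) as [HX HY]; try lra.
  pose proof (exp_pos (- k * t)).
  assert (exp (- r_rate rho * t) <= exp (- k * t)) by (apply exp_le_exp; nra).
  split; [fold k in HX |]; nra.
Qed.

Lemma equilibrium_loc_asymp_stable : loc_asymp_stable a b c d mu u xs 1.
Proof.
  split.
  - intros eps heps.
    destruct (exp_stability_estimate (eps / 4)) as [delta [k [hdelta [hk Hest]]]]; [lra |].
    exists delta. split; [assumption |]. intros X Y Hsol _ Hd0 t Ht.
    destruct (Hest X Y Hsol Hd0 t Ht) as [HX HY].
    assert (exp (- k * t) <= 1) by (rewrite <- exp_0; apply exp_le_exp; nra).
    eapply Rle_lt_trans; [apply dist2_le_sum |]. nra.
  - destruct (exp_stability_estimate 1) as [delta [k [hdelta [hk Hest]]]]; [lra |].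
    exists delta. split; [assumption |]. intros X Y Hsol _ Hd0.
    split; apply (filterlim_of_exp_bound _ _ k 1 hk); intros t Ht; apply (Hest X Y Hsol Hd0 t Ht).
Qed.
End Stability.

(** * Solutions through interior points *)

Definition clamp01 (x : R) : R := Rmax 0 (Rmin 1 x).
Definition logistic (w : R) : R := / (1 + exp (- w)).

Lemma clamp01_range x : 0 <= clamp01 x <= 1.
Proof. unfold clamp01, Rmax, Rmin. repeat destruct Rle_dec; lra. Qed.

Lemma clamp01_id x : 0 <= x <= 1 -> clamp01 x = x.
Proof. intros. unfold clamp01, Rmax, Rmin. repeat destruct Rle_dec; lra. Qed.

Lemma clamp01_lipschitz x y : Rabs (clamp01 x - clamp01 y) <= Rabs (x - y).
Proof.
  unfold clamp01, Rmax, Rmin. repeat destruct Rle_dec;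
  repeat match goal with |- context [Rabs ?z] =>
    destruct (Rcase_abs z); [rewrite (Rabs_left z) by lra | rewrite (Rabs_right z) by lra] end; lra.
Qed.

Lemma logistic_range w : 0 < logistic w < 1.
Proof.
  unfold logistic. pose proof (exp_pos (- w)). split.
  - apply Rinv_0_lt_compat; lra.
  - rewrite <- Rinv_1. apply Rinv_lt_contravar; lra.
Qed.

Lemma is_derive_logistic w : is_derive logistic w (logistic w * (1 - logistic w)).
Proof.
  unfold logistic. pose proof (exp_pos (- w)).
  auto_derive; [lra | field_simplify; lra].
Qed.

Lemma logistic_lipschitz w w' : Rabs (logistic w - logistic w') <= Rabs (w - w').
Proof.
  rewrite <- (Rmult_1_l (Rabs (w - w'))).
  apply (bounded_variation logistic (fun z => logistic z * (1 - logistic z))).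
  intros z _. split; [apply is_derive_logistic |].
  pose proof (logistic_range z). rewrite Rabs_right; nra.
Qed.

Lemma logistic_logit r : 0 < r < 1 -> logistic (ln (r / (1 - r))) = r.
Proof.
  intros hr. unfold logistic. rewrite exp_Ropp, exp_ln by (apply Rdiv_lt_0_compat; lra).
  field. lra.
Qed.

Lemma Fx_lipschitz_x a b c d mu u : exists L, 0 <= L /\
  forall x x' r, 0 <= x <= 1 -> 0 <= x' <= 1 -> 0 <= r <= 1 ->
    Rabs (Fx a b c d mu u x r - Fx a b c d mu u x' r) <= L * Rabs (x - x').
Proof.
  set (A := - c + d - a + b). set (B := a - b). set (C := d + b).
  exists (5 * (Rabs A + Rabs B) + 3 * (Rabs (b + u) + Rabs C) + 2 * Rabs mu).
  split; [pose proof (Rabs_pos A); pose proof (Rabs_pos B); pose proof (Rabs_pos (b + u));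
          pose proof (Rabs_pos C); pose proof (Rabs_pos mu); lra |].
  intros x x' r hx hx' hr.
  set (E := r * A + B). set (F := b + u - r * C).
  set (S := x ^ 2 + x * x' + x' ^ 2). set (T := x + x').
  replace (Fx a b c d mu u x r - Fx a b c d mu u x' r)
    with ((x - x') * (- (E * S) + (E - F) * T + F - 2 * mu))
    by (unfold Fx, E, F, S, T, A, B, C; ring).
  rewrite Rabs_mult, Rmult_comm. apply Rmult_le_compat_r; [apply Rabs_pos |].
  assert (hE : Rabs E <= Rabs A + Rabs B).
  { unfold E. eapply Rle_trans; [apply Rabs_triang |].
    rewrite Rabs_mult, (Rabs_right r) by lra. pose proof (Rabs_pos A). nra. }
  assert (hF : Rabs F <= Rabs (b + u) + Rabs C).
  { unfold F. eapply Rle_trans; [apply Rabs_triang |].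
    rewrite Rabs_Ropp, Rabs_mult, (Rabs_right r) by lra. pose proof (Rabs_pos C). nra. }
  assert (hS : Rabs S <= 3) by (unfold S; rewrite Rabs_right; nra).
  assert (hT : Rabs T <= 2) by (unfold T; rewrite Rabs_right; nra).
  assert (hEF : Rabs (E - F) <= Rabs E + Rabs F)
    by (eapply Rle_trans; [apply Rabs_triang | rewrite Rabs_Ropp; lra]).
  pose proof (Rabs_pos E). pose proof (Rabs_pos F). pose proof (Rabs_pos S).
  pose proof (Rabs_pos T). pose proof (Rabs_pos (E - F)).
  assert (h1 : Rabs (E * S) <= 3 * (Rabs A + Rabs B)) by (rewrite Rabs_mult; nra).
  assert (h2 : Rabs ((E - F) * T) <= 2 * (Rabs A + Rabs B + (Rabs (b + u) + Rabs C)))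
    by (rewrite Rabs_mult; nra).
  pose proof (Rle_abs mu). pose proof (Rle_abs (- mu)). rewrite Rabs_Ropp in *.
  apply Rabs_le_between in h1. apply Rabs_le_between in h2. apply Rabs_le_between in hF.
  apply Rabs_le. lra.
Qed.

(* With [r = logistic w] the equation [r' = r (1 - r) (2 x - 1)] becomes [w' = 2 x - 1];
   clamping [x] to [0, 1] makes the field globally Lipschitz and bounded. *)
Definition lifted_field (a b c d mu u : R) (i : bool) (z : bool -> R) : R :=
  if i then Fx a b c d mu u (clamp01 (z true)) (logistic (z false))
  else 2 * clamp01 (z true) - 1.

Lemma lifted_field_lipschitz a b c d mu u : exists L, 0 < L /\
  forall i z z', Rabs (lifted_field a b c d mu u i z - lifted_field a b c d mu u i z')
                 <= L * dist1 z z'.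
Proof.
  destruct (Fx_lipschitz_x a b c d mu u) as [Lx [hLx HLx]].
  set (Lr := Rabs (- c + d - a + b) + Rabs (d + b)).
  assert (hLr : 0 <= Lr) by (unfold Lr; pose proof (Rabs_pos (- c + d - a + b));
                             pose proof (Rabs_pos (d + b)); lra).
  exists (Lx + Lr + 2). split; [lra |]. intros i z z'. unfold dist1.
  pose proof (clamp01_range (z true)). pose proof (clamp01_range (z' true)).
  pose proof (logistic_range (z false)). pose proof (logistic_range (z' false)).
  pose proof (clamp01_lipschitz (z true) (z' true)).
  pose proof (logistic_lipschitz (z false) (z' false)).
  pose proof (Rabs_pos (z true - z' true)). pose proof (Rabs_pos (z false - z' false)).
  destruct i; simpl.
  - set (x := clamp01 (z true)) in *. set (x' := clamp01 (z' true)) in *.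
    set (r := logistic (z false)) in *. set (r' := logistic (z' false)) in *.
    assert (Hr : Rabs (Fx a b c d mu u x' r - Fx a b c d mu u x' r') <= Lr * Rabs (r - r')).
    { replace (Fx a b c d mu u x' r - Fx a b c d mu u x' r')
        with ((r - r') * Fx_slope_r a b c d x') by (unfold Fx, Fx_slope_r; ring).
      rewrite Rabs_mult, Rmult_comm. apply Rmult_le_compat_r; [apply Rabs_pos |].
      apply Fx_slope_r_bound; lra. }
    pose proof (HLx x x' r ltac:(lra) ltac:(lra) ltac:(lra)).
    pose proof (Rabs_triang (Fx a b c d mu u x r - Fx a b c d mu u x' r)
                            (Fx a b c d mu u x' r - Fx a b c d mu u x' r')).
    replace (Fx a b c d mu u x r - Fx a b c d mu u x' r') with
      (Fx a b c d mu u x r - Fx a b c d mu u x' r + (Fx a b c d mu u x' r - Fx a b c d mu u x' r'))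
      by ring.
    pose proof (Rabs_pos (x - x')). pose proof (Rabs_pos (r - r')). nra.
  - replace (2 * clamp01 (z true) - 1 - (2 * clamp01 (z' true) - 1))
      with (2 * (clamp01 (z true) - clamp01 (z' true))) by ring.
    rewrite Rabs_mult, (Rabs_right 2) by lra. nra.
Qed.

Lemma lifted_field_bounded a b c d mu u : exists B,
  forall i z, Rabs (lifted_field a b c d mu u i z) <= B.
Proof.
  destruct (Fx_lipschitz_x a b c d mu u) as [Lx [hLx HLx]].
  exists (Lx + Rabs mu + 1). intros i z.
  pose proof (clamp01_range (z true)). pose proof (logistic_range (z false)).
  pose proof (Rabs_pos mu).
  destruct i; simpl.
  - set (x := clamp01 (z true)) in *. set (r := logistic (z false)) in *.
    pose proof (HLx x 0 r ltac:(lra) ltac:(lra) ltac:(lra)) as Hx0.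
    replace (Fx a b c d mu u 0 r) with mu in Hx0 by (unfold Fx; ring).
    rewrite Rminus_0_r, (Rabs_right x) in Hx0 by lra.
    pose proof (Rabs_triang (Fx a b c d mu u x r - mu) mu).
    replace (Fx a b c d mu u x r - mu + mu) with (Fx a b c d mu u x r) in * by ring.
    nra.
  - apply Rabs_le. lra.
Qed.

Lemma is_derive_affine (F : R -> R) (al be t dF : R) :
  is_derive F t dF -> is_derive (fun s => al * F s + be) t (al * dF).
Proof.
  intros H.
  assert (HD : Derive F t = dF) by now apply is_derive_unique.
  assert (HE : ex_derive F t) by now exists dF.
  rewrite <- HD. auto_derive; [auto |].
  change (Derive (fun x => F x) t) with (Derive F t). ring.
Qed.

Lemma unit_interval_invariant (X G : R -> R) :
  0 < X 0 < 1 -> (forall t, continuous X t) -> (forall t, 0 < t -> is_derive X t (G t)) ->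
  (forall t, 0 < t -> X t = 0 -> 0 < G t) -> (forall t, 0 < t -> X t = 1 -> G t < 0) ->
  forall t, 0 <= t -> 0 <= X t <= 1.
Proof.
  intros HX0 Hcont Hder Hlow Hhigh t Ht.
  enough (-1 * X t + 0 <= 0 /\ 1 * X t + -1 <= 0) by lra.
  revert t Ht.
  apply (barrier_pair (fun s => -1 * X s + 0) (fun s => 1 * X s + -1)
           (fun s => -1 * G s) (fun s => 1 * G s)); [| | lra | lra | |].
  - apply (continuous_at_right (fun s => -1 * X s + 0)).
    apply (continuous_comp X (fun y => -1 * y + 0)); [apply Hcont |].
    apply (ex_derive_continuous (K := R_AbsRing) (V := R_NormedModule)). auto_derive. auto.
  - apply (continuous_at_right (fun s => 1 * X s + -1)).
    apply (continuous_comp X (fun y => 1 * y + -1)); [apply Hcont |].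
    apply (ex_derive_continuous (K := R_AbsRing) (V := R_NormedModule)). auto_derive. auto.
  - intros t Ht. split; apply is_derive_affine, Hder, Ht.
  - intros t Ht _ _. split; intros Hedge.
    + pose proof (Hlow t Ht ltac:(lra)). lra.
    + pose proof (Hhigh t Ht ltac:(lra)). lra.
Qed.

Lemma interior_solution_exists a b c d mu u x0 r0 :
  0 < mu -> 0 < x0 < 1 -> 0 < r0 < 1 ->
  exists X Y, is_solution a b c d mu u X Y /\ X 0 = x0 /\ Y 0 = r0.
Proof.
  intros hmu hx0 hr0.
  destruct (lifted_field_lipschitz a b c d mu u) as [L [hL HL]].
  destruct (lifted_field_bounded a b c d mu u) as [B HB].
  destruct (planar_ode_global_solution (lifted_field a b c d mu u) L B
              (fun i => if i then x0 else ln (r0 / (1 - r0))) hL HL HB)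
    as [Z [HZ0 [HZlip HZder]]].
  set (X := fun t => Z t true). set (W := fun t => Z t false).
  assert (Hcont : forall i t, continuous (fun s => Z s i) t).
  { intros i t. apply (lipschitz_continuous _ B); [| apply HZlip].
    pose proof (HB true (Z 0)). pose proof (Rabs_pos (lifted_field a b c d mu u true (Z 0))). lra. }
  assert (HX0 : X 0 = x0) by apply (HZ0 true).
  assert (Hrange : forall t, 0 <= t -> 0 <= X t <= 1).
  { apply (unit_interval_invariant X (fun s => lifted_field a b c d mu u true (Z s)));
      [lra | apply Hcont | intros t Ht; apply HZder, Ht | |];
      intros t Ht Hedge; unfold X in Hedge; simpl; rewrite Hedge, clamp01_id by lra;
      unfold Fx; lra. }
  exists X, (fun t => logistic (W t)). split; [split; [| split] | split].
  - intros t Ht. pose proof (HZder true t Ht) as HdX. pose proof (HZder false t Ht) as HdW.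
    simpl in HdX, HdW. fold X in HdX, HdW.
    rewrite clamp01_id in HdX, HdW by (apply Hrange; lra).
    split; [exact HdX |].
    unfold Fr. replace (logistic (W t) * (1 - logistic (W t)) * (2 * X t - 1))
      with (scal (2 * X t - 1) (logistic (W t) * (1 - logistic (W t))))
      by (unfold scal; simpl; unfold mult; simpl; ring).
    apply (is_derive_comp logistic W); [apply is_derive_logistic | exact HdW].
  - apply (continuous_at_right X), Hcont.
  - apply (continuous_at_right (fun s => logistic (W s))), continuous_comp; [apply Hcont |].
    apply (ex_derive_continuous (K := R_AbsRing) (V := R_NormedModule)).
    eexists; apply is_derive_logistic.
  - exact HX0.
  - unfold W. rewrite (HZ0 false). now apply logistic_logit.
Qed.

(** * Instability of the other equilibria *)

(* [(1 - 2 r1) (Y - r1)] is the distance of [Y] to the side [r = r1]; it solves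
   [Z' = Z (1 - Z) (1 - 2 r1) (2 X - 1)], whose last factor stays positive near [(x1, r1)]. *)
Lemma side_distance_grows a b c d mu u X Y x1 r1 e0 :
  is_solution a b c d mu u X Y -> (r1 = 0 \/ r1 = 1) ->
  0 < e0 <= 1 / 4 -> e0 <= (1 - 2 * r1) * (2 * x1 - 1) / 4 -> 0 < (1 - 2 * r1) * (Y 0 - r1) ->
  (forall t, 0 <= t -> Rabs (X t - x1) < e0 /\ Rabs (Y t - r1) < e0) ->
  forall t, 0 <= t ->
    (1 - 2 * r1) * (Y 0 - r1) / 2 * exp (3 * ((1 - 2 * r1) * (2 * x1 - 1)) / 16 * t)
    <= (1 - 2 * r1) * (Y t - r1).
Proof.
  intros [Hder [_ HY0]] hr1 he0 he0m HZ0 Hnear.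
  set (Z := fun s => (1 - 2 * r1) * (Y s - r1)).
  set (h := fun s => (1 - Z s) * ((1 - 2 * r1) * (2 * X s - 1))).
  apply (exp_escape Z h); [lra | exact HZ0 | | |].
  - apply (filterlim_at_right_comp_sub (fun y => (1 - 2 * r1) * (y - r1)) (fun _ => 0) Y 0)
      in HY0; [| apply (ex_derive_continuous (K := R_AbsRing) (V := R_NormedModule));
                 auto_derive; auto | apply continuous_const].
    eapply filterlim_ext; [| rewrite Rminus_0_r in HY0; exact HY0].
    intros s. simpl. unfold Z. ring.
  - intros t Ht.
    replace (Z t * h t) with ((1 - 2 * r1) * Fr (X t) (Y t))
      by (unfold h, Z, Fr; destruct hr1 as [-> | ->]; ring).
    apply (is_derive_ext (fun s => (1 - 2 * r1) * Y s + - ((1 - 2 * r1) * r1)));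
      [intros s; unfold Z; lra | apply is_derive_affine, (Hder t Ht)].
  - intros t Ht. destruct (Hnear t ltac:(lra)) as [HXt HYt].
    apply Rabs_def2 in HXt. apply Rabs_def2 in HYt.
    assert (HZt : 3 / 4 <= 1 - Z t) by (unfold Z; destruct hr1 as [-> | ->]; lra).
    assert (Hdir : (1 - 2 * r1) * (2 * x1 - 1) / 2 <= (1 - 2 * r1) * (2 * X t - 1))
      by (destruct hr1 as [-> | ->]; lra).
    unfold h. nra.
Qed.

Lemma unstable_side_point a b c d mu u x1 r1 :
  0 < mu -> (r1 = 0 \/ r1 = 1) -> 0 < x1 < 1 -> 0 < (1 - 2 * r1) * (2 * x1 - 1) ->
  unstable a b c d mu u x1 r1.
Proof.
  intros hmu hr1 hx1 hm Hst.
  set (e0 := Rmin (1 / 4) ((1 - 2 * r1) * (2 * x1 - 1) / 4)).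
  assert (he0 : 0 < e0 /\ e0 <= 1 / 4 /\ e0 <= (1 - 2 * r1) * (2 * x1 - 1) / 4).
  { unfold e0. split; [apply Rmin_pos; lra | split; [apply Rmin_l | apply Rmin_r]]. }
  destruct (Hst e0 (proj1 he0)) as [delta [hdel Hdel]].
  set (s0 := Rmin delta e0 / 2).
  assert (hs0 : 0 < s0 /\ s0 < delta /\ s0 < e0).
  { unfold s0. pose proof (Rmin_l delta e0). pose proof (Rmin_r delta e0).
    pose proof (Rmin_pos delta e0 hdel (proj1 he0)). lra. }
  assert (Hstart : 0 < r1 + (1 - 2 * r1) * s0 < 1) by (destruct hr1 as [-> | ->]; lra).
  destruct (interior_solution_exists a b c d mu u x1 (r1 + (1 - 2 * r1) * s0) hmu hx1 Hstart)
    as [X [Y [Hsol [HX0 HY0]]]].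
  assert (Hd0 : dist2 (X 0) (Y 0) x1 r1 < delta).
  { rewrite HX0, HY0. unfold dist2.
    replace ((x1 - x1) ^ 2 + (r1 + (1 - 2 * r1) * s0 - r1) ^ 2) with (s0 ^ 2)
      by (destruct hr1 as [-> | ->]; ring).
    rewrite sqrt_pow2; lra. }
  assert (Hnear : forall t, 0 <= t -> Rabs (X t - x1) < e0 /\ Rabs (Y t - r1) < e0).
  { intros t Ht. assert (HI : inI (X 0) (Y 0)) by (unfold inI; rewrite HX0, HY0; lra).
    pose proof (Hdel X Y Hsol HI Hd0 t Ht).
    pose proof (Rabs_le_dist2_l (X t) (Y t) x1 r1). pose proof (Rabs_le_dist2_r (X t) (Y t) x1 r1).
    lra. }
  assert (HZ0 : (1 - 2 * r1) * (Y 0 - r1) = s0) by (rewrite HY0; destruct hr1 as [-> | ->]; ring).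
  set (k := 3 * ((1 - 2 * r1) * (2 * x1 - 1)) / 16).
  assert (hk : 0 < k) by (unfold k; lra).
  set (T := 2 * e0 / (s0 * k)).
  assert (hT : 0 <= T) by (unfold T; apply Rlt_le, Rdiv_lt_0_compat; nra).
  pose proof (side_distance_grows a b c d mu u X Y x1 r1 e0 Hsol hr1 ltac:(lra) ltac:(lra)
                ltac:(lra) Hnear T hT) as Hgrow.
  fold k in Hgrow. rewrite HZ0 in Hgrow.
  destruct (Hnear T hT) as [_ HYT].
  assert (HYfar : (1 - 2 * r1) * (Y T - r1) < e0).
  { apply Rabs_def2 in HYT. destruct hr1 as [-> | ->]; lra. }
  pose proof (exp_ineq1_le (k * T)).
  assert (s0 / 2 * (k * T) = e0) by (unfold T; field; lra).
  nra.
Qed.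

Theorem lemma19 (a b c d mu u xs : R)
  (ha : 0 < a) (hb : 0 < b) (hc : 0 < c) (hd : 0 < d)
  (hmu : 0 < mu <= 1) (hu : (c + d) / 2 < u)
  (hxs : 1 / 2 < xs < 1) (heq : Fx a b c d mu u xs 1 = 0) :
  loc_asymp_stable a b c d mu u xs 1 /\
  (forall x r, is_equilibrium a b c d mu u x r -> (x, r) <> (xs, 1) ->
     unstable a b c d mu u x r).
Proof.
  split.
  - apply equilibrium_loc_asymp_stable; tauto.
  - intros x r Heq Hne.
    destruct (other_equilibria a b c d mu u xs ha hb hc hd (proj1 hmu) hu hxs heq x r Heq Hne)
      as [[-> Hx] | [-> Hx]]; apply unstable_side_point; lra.
Qed.
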